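(* Let $n=p^{\alpha}qr$ where $p,q,r$ are distinct primes and $\alpha\geq 1$ is an integer. Then the complement graph $\mathbb{AG}^c(\mathbb{Z}_n)$ of $\mathbb{AG}(\mathbb{Z}_n)$ has no induced cycle of odd length greater than $3$.
   Context: For a commutative ring $R$ with unity, the annihilating-ideal graph $\mathbb{AG}(R)$ is the simple graph whose vertex set is the set of all non-zero ideals of $R$ with non-zero annihilator, two distinct vertices $I,J$ being adjacent if and only if $IJ=0$. $\mathbb{AG}^c(R)$ denotes its complement (same vertex set, two distinct vertices adjacent iff they are not adjacent in $\mathbb{AG}(R)$). An induced cycle is an induced subgraph isomorphic to a cycle. *)

From mathcomp Require Import all_boot all_algebra.
Set Implicit Arguments. Unset Strict Implicit. Unset Printing Implicit Defensive.
Import GRing.Theory.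
Local Open Scope ring_scope.

Section AnnihilatingIdealGraph.
Variable R : finComNzRingType.

Definition is_ideal (I : {set R}) : Prop :=
  [/\ 0 \in I,
      (forall x y, x \in I -> y \in I -> x + y \in I) &
      (forall a x, x \in I -> a * x \in I)].

(* I J = 0 : the product ideal (generated by all products x*y, x in I,
   y in J) is zero, i.e. every such product is zero. *)
Definition ideal_prod_zero (I J : {set R}) : Prop :=
  forall x y, x \in I -> y \in J -> x * y = 0.

Definition ann (I : {set R}) : {set R} := [set a | [forall x in I, a * x == 0]].

Definition AG_vertex (I : {set R}) : Prop :=
  [/\ is_ideal I, I != [set 0] & ann I != [set 0]].

Definition AG_adj (I J : {set R}) : Prop := I != J /\ ideal_prod_zero I J.
Definition AGc_adj (I J : {set R}) : Prop := I != J /\ ~ AG_adj I J.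

End AnnihilatingIdealGraph.

Definition cycle_adj (k : nat) (i j : 'I_k) : bool :=
  (val j == (val i).+1 %% k)%N || (val i == (val j).+1 %% k)%N.

Definition induced_cycle (T : Type) (V : T -> Prop) (E : T -> T -> Prop)
    (k : nat) (c : 'I_k -> T) : Prop :=
  [/\ injective c, (forall i, V (c i)) &
      (forall i j, E (c i) (c j) <-> cycle_adj i j)].

From mathcomp Require Import all_boot all_algebra.
From mathcomp Require Import zify.

Set Implicit Arguments.
Unset Strict Implicit.
Unset Printing Implicit Defensive.

Import GRing.Theory.

(* In Z_n with n = p^a q r, a product x y vanishes iff p^a, q and r all divide
   it.  Hence whether some x in I and y in J have x y <> 0 depends only on
   three invariants of each vertex: the largest value of a - v_p(x) over I,
   and whether I contains an element prime to q, resp. to r.  So AG^c(Z_n) is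
   a threshold graph united with two cliques.  Such a graph has no induced
   cycle of length at least 5: let v0 maximise the threshold weight on the
   cycle v0 v1 v2 v3 v4 ...; as v0 is not adjacent to v2 and v3, maximality
   kills the threshold condition along v1 v2 v3 v4, which would then be an
   induced path on four vertices in a union of two cliques, and those are
   P4-free. *)

Section FeatureGraph.
Variables (T : Type) (a : nat) (g : T -> nat) (b c : pred T).

Definition two_cliques_adj (x y : T) : bool := (b x && b y) || (c x && c y).

Definition feature_adj (x y : T) : bool := (a < g x + g y) || two_cliques_adj x y.

Lemma two_cliques_adj_P4_free (v1 v2 v3 v4 : T) :
  two_cliques_adj v1 v2 -> two_cliques_adj v2 v3 -> two_cliques_adj v3 v4 ->
  ~~ two_cliques_adj v1 v3 -> ~~ two_cliques_adj v2 v4 -> False.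
Proof.
rewrite /two_cliques_adj.
by case: (b v1); case: (b v2); case: (b v3); case: (b v4);
   case: (c v1); case: (c v2); case: (c v3); case: (c v4).
Qed.

Lemma feature_adjE (x y : T) :
  g x + g y <= a -> feature_adj x y = two_cliques_adj x y.
Proof. by rewrite /feature_adj leqNgt => /negbTE->. Qed.

Lemma two_cliques_feature_adj (x y : T) :
  two_cliques_adj x y -> feature_adj x y.
Proof. by rewrite /feature_adj => ->; rewrite orbT. Qed.

Lemma feature_adj_P4_beside_max (v0 v1 v2 v3 v4 : T) :
  g v1 <= g v0 -> g v2 <= g v0 -> g v4 <= g v0 ->
  ~~ feature_adj v0 v2 -> ~~ feature_adj v0 v3 ->
  feature_adj v1 v2 -> feature_adj v2 v3 -> feature_adj v3 v4 ->
  ~~ feature_adj v1 v3 -> ~~ feature_adj v2 v4 -> False.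
Proof.
move=> g1 g2 g4 n02 n03 e12 e23 e34 n13 n24.
have low x y : g x <= g v0 -> ~~ feature_adj v0 y -> g x + g y <= a.
  move=> gx /norP[]; rewrite -leqNgt => le _.
  exact: leq_trans (leq_add gx (leqnn _)) le.
have nonedge x y : ~~ feature_adj x y -> ~~ two_cliques_adj x y.
  by apply: contra; apply: two_cliques_feature_adj.
apply: (@two_cliques_adj_P4_free v1 v2 v3 v4); rewrite ?nonedge //.
- by rewrite -feature_adjE // low.
- by rewrite -feature_adjE // low.
- by rewrite -feature_adjE // addnC low.
Qed.

End FeatureGraph.

Section CycleVertices.
Variable k : nat.

Definition cycle_vertex (u : 'I_k.+1) (m : nat) : 'I_k.+1 := inZp (u + m).

Lemma cycle_vertex0 (u : 'I_k.+1) : cycle_vertex u 0 = u.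
Proof. by apply: val_inj; rewrite /= addn0 modn_small. Qed.

Lemma eq_cycle_vertex (u : 'I_k.+1) (m m' : nat) :
  (cycle_vertex u m == cycle_vertex u m') = (m == m' %[mod k.+1]).
Proof. by rewrite -val_eqE /= eqn_modDl. Qed.

Lemma cycle_adj_cycle_vertex (u : 'I_k.+1) (m m' : nat) :
  cycle_adj (cycle_vertex u m) (cycle_vertex u m') =
  (m' == m.+1 %[mod k.+1]) || (m == m'.+1 %[mod k.+1]).
Proof.
have succ n : ((u + n) %% k.+1).+1 %% k.+1 = (u + n.+1) %% k.+1.
  by rewrite -addn1 modnDml addn1 addnS.
by rewrite /cycle_adj /= !succ !eqn_modDl.
Qed.

End CycleVertices.

Lemma feature_adj_no_long_induced_cycle (T : Type) a (g : T -> nat)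
    (b c : pred T) k (f : 'I_k.+1 -> T) :
  4 < k.+1 ->
  ~ (forall i j, i != j -> feature_adj a g b c (f i) (f j) = cycle_adj i j).
Proof.
move=> k4 f_adj.
have [u _ u_max] := @arg_maxnP _ ord0 xpredT (g \o f) isT.
pose v m := f (cycle_vertex u m).
have v_max m : g (v m) <= g (v 0) by rewrite /v cycle_vertex0; apply: u_max.
have v_adj m m' : m <= 4 -> m' <= 4 -> m != m' ->
    feature_adj a g b c (v m) (v m') =
    (m' == m.+1 %[mod k.+1]) || (m == m'.+1 %[mod k.+1]).
  move=> m4 m'4 mm'; rewrite f_adj ?cycle_adj_cycle_vertex //.
  by rewrite eq_cycle_vertex !modn_small //; lia.
apply: (@feature_adj_P4_beside_max _ a g b c (v 0) (v 1) (v 2) (v 3) (v 4));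
  rewrite ?v_max ?v_adj ?eqxx //.
all: have [-> // | k_gt5] : k = 4 \/ 5 < k.+1 by lia.
all: by rewrite !modn_small //; lia.
Qed.

Lemma exists_pair_threshold (T : finType) a (g : T -> nat) (X Y : {set T}) :
  (forall x, g x <= a) ->
  [exists x in X, exists y in Y, a < g x + g y] =
  (a < \max_(x in X) g x + \max_(y in Y) g y).
Proof.
move=> g_le; apply/idP/idP.
  case/existsP=> x /andP[xX /existsP[y /andP[yY lt]]].
  by apply: leq_trans lt _; apply: leq_add; apply: leq_bigmax_cond.
have max_le (Z : {set T}) : \max_(z in Z) g z <= a by apply/bigmax_leqP.
case: (posnP #|X|) => [/cards0_eq-> | /(eq_bigmax_cond g)[x xX ->]].
  by rewrite big_set0 ltnNge add0n max_le.
case: (posnP #|Y|) => [/cards0_eq-> | /(eq_bigmax_cond g)[y yY ->] lt].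
  by rewrite big_set0 ltnNge addn0 g_le.
by apply/existsP; exists x; rewrite xX; apply/existsP; exists y; rewrite yY.
Qed.

Lemma exists_pair_both (T : finType) (b : pred T) (X Y : {set T}) :
  [exists x in X, exists y in Y, b x && b y] =
  [exists x in X, b x] && [exists y in Y, b y].
Proof.
apply/idP/andP.
  case/existsP=> x /andP[xX /existsP[y /andP[yY /andP[bx by_]]]].
  by split; apply/existsP; [exists x; rewrite xX | exists y; rewrite yY].
case=> /existsP[x /andP[xX bx]] /existsP[y /andP[yY by_]].
by apply/existsP; exists x; rewrite xX; apply/existsP; exists y; rewrite yY bx.
Qed.

Lemma exists_pair_feature_adj (T : finType) a (g : T -> nat) (b c : pred T)
    (X Y : {set T}) :
  (forall x, g x <= a) ->
  [exists x in X, exists y in Y, feature_adj a g b c x y] =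
  feature_adj a (fun Z : {set T} => \max_(z in Z) g z)
    (fun Z => [exists z in Z, b z]) (fun Z => [exists z in Z, c z]) X Y.
Proof.
move=> g_le; rewrite /feature_adj /two_cliques_adj.
rewrite -exists_pair_threshold // -!exists_pair_both.
apply/existsP/or3P.
  case=> x /andP[xX /existsP[y /andP[yY /or3P adj]]].
  by case: adj => h; [apply: Or31 | apply: Or32 | apply: Or33];
     apply/existsP; exists x; rewrite xX; apply/existsP; exists y; rewrite yY.
by case=> /existsP[x /andP[xX /existsP[y /andP[yY h]]]];
   exists x; rewrite xX; apply/existsP; exists y; rewrite yY h ?orbT.
Qed.

Lemma AGc_adjE (R : finComNzRingType) (I J : {set R}) : I != J ->
  AGc_adj I J <-> [exists x in I, exists y in J, (x * y != 0)%R].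
Proof.
move=> IJ; split=> [[_ not_adj] | /existsP[x /andP[xI /existsP[y /andP[yJ]]]]].
  apply: contraT => /existsPn no_pair; exfalso; apply: not_adj; split=> // x y xI yJ.
  by move: (no_pair x); rewrite xI => /existsPn/(_ y); rewrite yJ negbK => /eqP.
by move=> xy_nz; split=> // -[_ /(_ x y xI yJ) xy0]; rewrite xy0 eqxx in xy_nz.
Qed.

Lemma Zp_mul_eq0 (m : nat) (x y : 'Z_m) :
  1 < m -> ((x * y)%R == 0%R) = (m %| x * y).
Proof.
move=> m_gt1; have -> : (x * y = (x * y)%:R :> 'Z_m)%R by rewrite natrM !natr_Zp.
by rewrite -val_eqE /= val_Zp_nat.
Qed.

Lemma Gauss_dvd3 (d1 d2 d3 m : nat) :
  coprime d1 d2 -> coprime d1 d3 -> coprime d2 d3 ->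
  (d1 * d2 * d3 %| m) = [&& d1 %| m, d2 %| m & d3 %| m].
Proof.
move=> c12 c13 c23.
by rewrite Gauss_dvd ?coprimeMl ?c13 // Gauss_dvd // andbA.
Qed.

(* a - v_p(x), with v_p(0) read as +oo *)
Definition pgap (p a x : nat) : nat := if x == 0 then 0 else a - logn p x.

Lemma pgap_le (p a x : nat) : pgap p a x <= a.
Proof. by rewrite /pgap; case: eqP => // _; apply: leq_subr. Qed.

Lemma pfactor_dvdnM_pgap (p a x y : nat) : prime p ->
  (p ^ a %| x * y) = (pgap p a x + pgap p a y <= a).
Proof.
move=> p_pr.
have [-> | x_gt0] := posnP x; first by rewrite mul0n dvdn0 add0n pgap_le.
have [-> | y_gt0] := posnP y; first by rewrite muln0 dvdn0 addn0 pgap_le.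
by rewrite /pgap !gtn_eqF // pfactor_dvdn ?muln_gt0 ?x_gt0 // lognM //; lia.
Qed.

Section ZpqrProducts.
Variables p q r a : nat.
Hypotheses (p_pr : prime p) (q_pr : prime q) (r_pr : prime r).
Hypotheses (pq : p != q) (pr : p != r) (qr : q != r).
Local Notation n := (p ^ a * q * r).

Lemma Zpqr_mul_neq0 (x y : 'Z_n) :
  ((x * y)%R != 0%R) =
  feature_adj a (pgap p a) (fun z => ~~ (q %| z)) (fun z => ~~ (r %| z)) x y.
Proof.
have n_gt1 : 1 < n.
  by rewrite (leq_trans (prime_gt1 r_pr)) // leq_pmull // muln_gt0 expn_gt0 !prime_gt0.
have coprime_pr (s t : nat) : prime s -> prime t -> s != t -> coprime s t.
  by move=> s_pr t_pr st; rewrite prime_coprime // dvdn_prime2.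
rewrite Zp_mul_eq0 // Gauss_dvd3 ?coprimeXl ?coprime_pr //.
rewrite pfactor_dvdnM_pgap // !Euclid_dvdM // /feature_adj /two_cliques_adj.
by rewrite !negb_and !negb_or -ltnNge.
Qed.

Lemma AGc_adj_Zpqr (I J : {set 'Z_n}) : I != J ->
  AGc_adj I J <->
  feature_adj a (fun Z : {set 'Z_n} => \max_(z in Z) pgap p a z)
    (fun Z => [exists z in Z, ~~ (q %| z)]) (fun Z => [exists z in Z, ~~ (r %| z)])
    I J.
Proof.
move=> IJ; rewrite AGc_adjE // -exists_pair_feature_adj => [|z]; last exact: pgap_le.
by under eq_existsb => x do under eq_existsb => y do rewrite Zpqr_mul_neq0.
Qed.

End ZpqrProducts.

Theorem lemma5 (p q r alpha : nat) :
  prime p -> prime q -> prime r -> p != q -> p != r -> q != r -> (0 < alpha)%N ->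
  forall (k : nat) (c : 'I_k -> {set 'Z_(p ^ alpha * q * r)}),
    odd k -> (3 < k)%N ->
    ~ induced_cycle (@AG_vertex _) (@AGc_adj _) c.
Proof.
move=> p_pr q_pr r_pr pq pr qr _ k.
case: k => [|k] // cyc k_odd k_gt3 [cyc_inj _ cyc_adj].
have k_ne4 : k.+1 != 4 by apply: contraTneq k_odd => ->.
have k_gt4 : 4 < k.+1 by lia.
apply: (feature_adj_no_long_induced_cycle k_gt4) => i j ij.
have cij : cyc i != cyc j by rewrite (inj_eq cyc_inj).
have adjE := AGc_adj_Zpqr p_pr q_pr r_pr pq pr qr cij.
by apply/idP/idP => [/adjE/cyc_adj | /cyc_adj/adjE].
Qed.
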